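(* Assume $\{\beta\in\mathbb{R}^p: A\beta\le b,\ \Gamma\beta=d\}\neq\emptyset$. Run the generalized SMO algorithm with $\tau=0$ from some $\theta^0\in\mathcal F$ and suppose it never stops ($\Delta^k>0$ for all $k$). Let $K\subseteq\mathbb{N}$ be an infinite set of iterations at which the update is not clipped. Then $\Delta^k\to0$ as $k\to\infty$ with $k\in K$; in particular each of $\Delta_1,\Delta_2,\Delta_3,\Delta_4$ computed at $\theta^k$ tends to $0$ along $K$.
   Context: Setup. Let $n,p,k_1,k_2\ge1$, $X\in\mathbb{R}^{n\times p}$ with rows $X_{i:}$, $y\in\mathbb{R}^n$, $C>0$, $\nu\in(0,1]$, $A\in\mathbb{R}^{k_1\times p}$, $b\in\mathbb{R}^{k_1}$, $\Gamma\in\mathbb{R}^{k_2\times p}$, $d\in\mathbb{R}^{k_2}$; $\mathbf e$ is the all-ones vector and $Q=XX^T\in\mathbb{R}^{n\times n}$. Dual variables are $\theta=(\alpha,\alpha^*,\gamma,\mu)\in\mathbb{R}^n\times\mathbb{R}^n\times\mathbb{R}^{k_1}\times\mathbb{R}^{k_2}$. Let $M$ be the $(2n+k_1+k_2)\times p$ matrix with row blocks $X,-X,A,-\Gamma$, $\bar Q=MM^T$, $l=(y,-y,b,-d)$, and $f(\theta)=\frac12\theta^T\bar Q\theta+l^T\theta$. The feasible set $\mathcal F$ consists of $\theta$ with $0\le\alpha_i,\alpha_i^*\le C/n$ for all $i$, $\mathbf e^T(\alpha+\alpha^* )\le C\nu$, $\mathbf e^T(\alpha-\alpha^* )=0$,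 $\gamma_j\ge0$ for all $j$. Generalized SMO algorithm. Assume the rows of $X$ are pairwise distinct and no row of $A$ or $\Gamma$ is zero. Let $I_{up}(\alpha)=\{i:\alpha_i<C/n\}$, $I_{low}(\alpha)=\{i:\alpha_i>0\}$, and $I^*_{up},I^*_{low}$ the same sets for $\alpha^*$. Fix $\tau\ge0$ and $\theta^0\in\mathcal F$. At iteration $k$, with all gradients evaluated at $\theta^k$: pick $i\in\arg\min_{I_{up}(\alpha^k)}\nabla_{\alpha_i}f$, $j\in\arg\max_{I_{low}(\alpha^k)}\nabla_{\alpha_j}f$ and set $\Delta_1=\max(\nabla_{\alpha_j}f-\nabla_{\alpha_i}f,0)$ ($\Delta_1=0$ if either set is empty); define $i^*,j^*,\Delta_2$ identically for $\alpha^*$; $\Delta_3=\max(-\min_{s}\nabla_{\gamma_s}f,0)$; $\Delta_4=\max_s|\nabla_{\mu_s}f|$; $\Delta^k=\max(\Delta_1,\Delta_2,\Delta_3,\Delta_4)$. If $\Delta^k\le\tau$ stop; otherwise update the first block (in the order $\alpha,\alpha^*,\gamma,\mu$) whose $\Delta_m$ equals $\Delta^k$, leaving all other coordinates unchanged: Block $\alpha$: $t_q=-\frac{\nabla_{\alpha_i}f-\nabla_{\alpha_j}f}{Q_{ii}+Q_{jj}-2Q_{ij}}$, $I_1=\max(-\alpha_i^k,\alpha_j^k-C/n)$, $I_2=\min(\alpha_j^k,C/n-\alpha_i^k)$, $t^*=\min(\max(I_1,t_q),I_2)$, $\alpha_i^{k+1}=\alpha_i^k+t^*$, $\alpha_j^{k+1}=\alpha_j^k-t^*$.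 Block $\alpha^*$: the same formulas with $\alpha^*$, $(i^*,j^* )$, $\nabla_{\alpha^*}f$ and the same matrix $Q$. Block $\gamma$: $u\in\arg\min_s\nabla_{\gamma_s}f$, $\gamma_u^{k+1}=\max\big(\gamma_u^k-\nabla_{\gamma_u}f/(AA^T)_{uu},0\big)$. Block $\mu$: $u\in\arg\max_s|\nabla_{\mu_s}f|$, $\mu_u^{k+1}=\mu_u^k-\nabla_{\mu_u}f/(\Gamma\Gamma^T)_{uu}$. Clipping. An update in block $\alpha$ or $\alpha^*$ is called clipped if $t^*\neq t_q$; an update in block $\gamma$ is clipped if $\gamma_u^k-\nabla_{\gamma_u}f(\theta^k)/(AA^T)_{uu}<0$; updates in block $\mu$ are never clipped. *)

(* classical reals.  Vectors/matrices are functions on nat,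
   only the entries below the relevant dimension are ever used. *)
From Stdlib Require Import Reals Lra List Arith.
Open Scope R_scope.

Record prob := Prob {
  pn : nat; pp : nat; pk1 : nat; pk2 : nat;
  pX : nat -> nat -> R;   (* n x p *)
  py : nat -> R;
  pC : R; pnu : R;
  pA : nat -> nat -> R;   (* k1 x p *)
  pb : nat -> R;
  pG : nat -> nat -> R;   (* Gamma, k2 x p *)
  pd : nat -> R
}.

Record theta := Theta {
  al : nat -> R; als : nat -> R; ga : nat -> R; mu : nat -> R
}.

Fixpoint sumR (m : nat) (f : nat -> R) : R :=
  match m with O => 0 | S m' => sumR m' f + f m' end.

Definition Cn (P : prob) : R := pC P / INR (pn P).

(* w = M^T theta, a vector of R^p  (M has row blocks X, -X, A, -Gamma) *)
Definition wvec (P : prob) (th : theta) (c : nat) : R :=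
  sumR (pn P) (fun i => pX P i c * al th i)
  - sumR (pn P) (fun i => pX P i c * als th i)
  + sumR (pk1 P) (fun s => pA P s c * ga th s)
  - sumR (pk2 P) (fun s => pG P s c * mu th s).

(* gradient of f = Qbar theta + l = M (M^T theta) + l, blockwise,
   with l = (y, -y, b, -d) *)
Definition grad_al (P : prob) (th : theta) (i : nat) : R :=
  sumR (pp P) (fun c => pX P i c * wvec P th c) + py P i.
Definition grad_als (P : prob) (th : theta) (i : nat) : R :=
  - sumR (pp P) (fun c => pX P i c * wvec P th c) - py P i.
Definition grad_ga (P : prob) (th : theta) (s : nat) : R :=
  sumR (pp P) (fun c => pA P s c * wvec P th c) + pb P s.
Definition grad_mu (P : prob) (th : theta) (s : nat) : R :=
  - sumR (pp P) (fun c => pG P s c * wvec P th c) - pd P s.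

Definition Qm (P : prob) (i j : nat) : R := sumR (pp P) (fun c => pX P i c * pX P j c).
Definition AAt (P : prob) (s t : nat) : R := sumR (pp P) (fun c => pA P s c * pA P t c).
Definition GGt (P : prob) (s t : nat) : R := sumR (pp P) (fun c => pG P s c * pG P t c).

Definition feasible (P : prob) (th : theta) : Prop :=
  (forall i, (i < pn P)%nat ->
     0 <= al th i <= Cn P /\ 0 <= als th i <= Cn P) /\
  sumR (pn P) (fun i => al th i + als th i) <= pC P * pnu P /\
  sumR (pn P) (fun i => al th i - als th i) = 0 /\
  (forall s, (s < pk1 P)%nat -> 0 <= ga th s).

Fixpoint lmin (l : list R) : option R :=
  match l with
  | nil => None
  | x :: r => match lmin r with None => Some x | Some m => Some (Rmin x m) end
  end.
Fixpoint lmax (l : list R) : option R :=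
  match l with
  | nil => None
  | x :: r => match lmax r with None => Some x | Some m => Some (Rmax x m) end
  end.

Definition Rltb (x y : R) : bool := if Rlt_dec x y then true else false.

Definition I_up (P : prob) (a : nat -> R) : list nat :=
  filter (fun i => Rltb (a i) (Cn P)) (seq 0 (pn P)).
Definition I_low (P : prob) (a : nat -> R) : list nat :=
  filter (fun i => Rltb 0 (a i)) (seq 0 (pn P)).

Definition Delta_pair (P : prob) (a g : nat -> R) : R :=
  match lmin (map g (I_up P a)), lmax (map g (I_low P a)) with
  | Some m, Some M => Rmax (M - m) 0
  | _, _ => 0
  end.

Definition Delta1 (P : prob) (th : theta) : R := Delta_pair P (al th) (grad_al P th).
Definition Delta2 (P : prob) (th : theta) : R := Delta_pair P (als th) (grad_als P th).
Definition Delta3 (P : prob) (th : theta) : R :=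
  match lmin (map (grad_ga P th) (seq 0 (pk1 P))) with
  | Some m => Rmax (- m) 0 | None => 0 end.
Definition Delta4 (P : prob) (th : theta) : R :=
  match lmax (map (fun s => Rabs (grad_mu P th s)) (seq 0 (pk2 P))) with
  | Some M => M | None => 0 end.
Definition DeltaK (P : prob) (th : theta) : R :=
  Rmax (Rmax (Delta1 P th) (Delta2 P th)) (Rmax (Delta3 P th) (Delta4 P th)).

Definition is_argmin_up (P : prob) (a g : nat -> R) (i : nat) : Prop :=
  (i < pn P)%nat /\ a i < Cn P /\
  forall i', (i' < pn P)%nat -> a i' < Cn P -> g i <= g i'.
Definition is_argmax_low (P : prob) (a g : nat -> R) (j : nat) : Prop :=
  (j < pn P)%nat /\ 0 < a j /\
  forall j', (j' < pn P)%nat -> 0 < a j' -> g j' <= g j.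

Definition tq (P : prob) (g : nat -> R) (i j : nat) : R :=
  - (g i - g j) / (Qm P i i + Qm P j j - 2 * Qm P i j).
Definition tstar (P : prob) (a g : nat -> R) (i j : nat) : R :=
  Rmin (Rmax (Rmax (- a i) (a j - Cn P)) (tq P g i j))
       (Rmin (a j) (Cn P - a i)).
Definition pair_upd (a : nat -> R) (i j : nat) (t : R) : nat -> R :=
  fun s => if Nat.eqb s i then a i + t else if Nat.eqb s j then a j - t else a s.
Definition upd1 (a : nat -> R) (u : nat) (v : R) : nat -> R :=
  fun s => if Nat.eqb s u then v else a s.

(* The index choices among argmin/argmax ties are arbitrary. *)
Definition smo_iter (P : prob) (tau : R) (th th' : theta) (clipped : bool) : Prop :=
  tau < DeltaK P th /\
  (
    (Delta1 P th = DeltaK P th /\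
     exists i j,
       is_argmin_up P (al th) (grad_al P th) i /\
       is_argmax_low P (al th) (grad_al P th) j /\
       th' = Theta (pair_upd (al th) i j (tstar P (al th) (grad_al P th) i j))
                   (als th) (ga th) (mu th) /\
       (clipped = true <-> tstar P (al th) (grad_al P th) i j <> tq P (grad_al P th) i j))
  \/
    (Delta1 P th <> DeltaK P th /\ Delta2 P th = DeltaK P th /\
     exists i j,
       is_argmin_up P (als th) (grad_als P th) i /\
       is_argmax_low P (als th) (grad_als P th) j /\
       th' = Theta (al th)
                   (pair_upd (als th) i j (tstar P (als th) (grad_als P th) i j))
                   (ga th) (mu th) /\
       (clipped = true <-> tstar P (als th) (grad_als P th) i j <> tq P (grad_als P th) i j))
  \/
    (Delta1 P th <> DeltaK P th /\ Delta2 P th <> DeltaK P th /\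
     Delta3 P th = DeltaK P th /\
     exists u, (u < pk1 P)%nat /\
       (forall s, (s < pk1 P)%nat -> grad_ga P th u <= grad_ga P th s) /\
       th' = Theta (al th) (als th)
               (upd1 (ga th) u (Rmax (ga th u - grad_ga P th u / AAt P u u) 0))
               (mu th) /\
       (clipped = true <-> ga th u - grad_ga P th u / AAt P u u < 0))
  \/
    (Delta1 P th <> DeltaK P th /\ Delta2 P th <> DeltaK P th /\
     Delta3 P th <> DeltaK P th /\ Delta4 P th = DeltaK P th /\
     exists u, (u < pk2 P)%nat /\
       (forall s, (s < pk2 P)%nat -> Rabs (grad_mu P th s) <= Rabs (grad_mu P th u)) /\
       th' = Theta (al th) (als th) (ga th)
               (upd1 (mu th) u (mu th u - grad_mu P th u / GGt P u u)) /\
       clipped = false) ).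

Definition conv0_along (K : nat -> Prop) (u : nat -> R) : Prop :=
  forall eps, 0 < eps -> exists N, forall k, (N <= k)%nat -> K k -> Rabs (u k) < eps.

From Stdlib Require Import Reals Lra Lia List Classical FunctionalExtensionality.
Open Scope R_scope.

(* Each iteration moves theta along a line (e_i - e_j in one of the alpha blocks, or a
   coordinate of gamma or mu) and minimises the convex quadratic f on that line, exactly
   or, when clipped, up to the box constraints; so f never increases and the box is
   preserved.  Along a line of slope G and curvature q an unclipped step lowers f by
   G^2 / (2 q), and for the block chosen G^2 = (Delta^k)^2 while q is at most a constant B
   depending only on the data.  Hence f drops by (Delta^k)^2 / (2 B) for every k in K.
   Feasibility of {A beta <= b, Gamma beta = d} bounds f from below on the box (weak
   duality), so the sum of (Delta^k)^2 over K is finite. *)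

Lemma sumR_ext m F G : (forall s, (s < m)%nat -> F s = G s) -> sumR m F = sumR m G.
Proof. induction m; simpl; intros H; auto. rewrite IHm, H; auto; intros; apply H; lia. Qed.

Lemma sumR_add m F G : sumR m (fun s => F s + G s) = sumR m F + sumR m G.
Proof. induction m; simpl; [ring | rewrite IHm; ring]. Qed.

Lemma sumR_sub m F G : sumR m (fun s => F s - G s) = sumR m F - sumR m G.
Proof. induction m; simpl; [ring | rewrite IHm; ring]. Qed.

Lemma sumR_scal m c F : sumR m (fun s => c * F s) = c * sumR m F.
Proof. induction m; simpl; [ring | rewrite IHm; ring]. Qed.

Lemma sumR_opp m F : sumR m (fun s => - F s) = - sumR m F.
Proof. induction m; simpl; [ring | rewrite IHm; ring]. Qed.

Lemma sumR_mul0 m F : sumR m (fun s => F s * 0) = 0.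
Proof. induction m; simpl; [ring | rewrite IHm; ring]. Qed.

Lemma sumR_lin m F a t b : sumR m (fun s => F s * (a s + t * b s)) =
  sumR m (fun s => F s * a s) + t * sumR m (fun s => F s * b s).
Proof. rewrite <- sumR_scal, <- sumR_add. apply sumR_ext; intros; ring. Qed.

Lemma sumR_le m F G : (forall s, (s < m)%nat -> F s <= G s) -> sumR m F <= sumR m G.
Proof.
  induction m; simpl; intros H; [lra|].
  assert (F m <= G m) by (apply H; lia).
  assert (sumR m F <= sumR m G) by (apply IHm; intros; apply H; lia).
  lra.
Qed.

Lemma sumR_nonneg m F : (forall s, (s < m)%nat -> 0 <= F s) -> 0 <= sumR m F.
Proof.
  induction m; simpl; intros H; [lra|].
  assert (0 <= F m) by (apply H; lia).
  assert (0 <= sumR m F) by (apply IHm; intros; apply H; lia).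
  lra.
Qed.

Lemma sumR_term_le m F u :
  (forall s, (s < m)%nat -> 0 <= F s) -> (u < m)%nat -> F u <= sumR m F.
Proof.
  induction m; simpl; intros H Hu; [lia|].
  assert (0 <= sumR m F) by (apply sumR_nonneg; intros; apply H; lia).
  destruct (Nat.eq_dec u m) as [-> | Hne]; [lra|].
  assert (F u <= sumR m F) by (apply IHm; [intros; apply H | ]; lia).
  assert (0 <= F m) by (apply H; lia).
  lra.
Qed.

Lemma sumR_sq_nonneg m F : 0 <= sumR m (fun c => F c * F c).
Proof. apply sumR_nonneg; intros; nra. Qed.

Lemma sumR_sq_pos m F c : (c < m)%nat -> F c <> 0 -> 0 < sumR m (fun c => F c * F c).
Proof.
  intros Hc Hne.
  assert (0 < F c * F c) by (destruct (Rtotal_order (F c) 0) as [|[|]]; [nra | easy | nra]).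
  pose proof (sumR_term_le m (fun c => F c * F c) c ltac:(intros; nra) Hc).
  lra.
Qed.

Lemma sumR_pairing_swap m p (F : nat -> nat -> R) a b :
  sumR p (fun c => sumR m (fun i => F i c * a i) * b c) =
  sumR m (fun i => a i * sumR p (fun c => F i c * b c)).
Proof.
  induction m as [|m IH]; simpl.
  - rewrite (sumR_ext p _ (fun c => b c * 0)) by (intros; ring). apply sumR_mul0.
  - rewrite (sumR_ext p _ (fun c => sumR m (fun i => F i c * a i) * b c + a m * (F m c * b c)))
      by (intros; ring).
    rewrite sumR_add, IH, sumR_scal. reflexivity.
Qed.

Definition ind (u s : nat) : R := if Nat.eqb s u then 1 else 0.

Lemma sumR_ind m F u : (u < m)%nat -> sumR m (fun s => F s * ind u s) = F u.
Proof.
  induction m; simpl; intros Hu; [lia|]. unfold ind at 2.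
  destruct (Nat.eqb_spec m u) as [-> | Hne].
  - rewrite (sumR_ext _ _ (fun s => F s * 0)), sumR_mul0; [ring|].
    intros s Hs; unfold ind; destruct (Nat.eqb_spec s u); [lia | ring].
  - rewrite IHm; [ring | lia].
Qed.

Lemma sumR_ind_sub m F i j : (i < m)%nat -> (j < m)%nat ->
  sumR m (fun s => F s * (ind i s - ind j s)) = F i - F j.
Proof.
  intros. rewrite (sumR_ext _ _ (fun s => F s * ind i s - F s * ind j s)) by (intros; ring).
  rewrite sumR_sub, !sumR_ind; auto.
Qed.

Definition linp (P : prob) (th : theta) : R :=
  sumR (pn P) (fun i => py P i * (al th i - als th i)) +
  sumR (pk1 P) (fun s => pb P s * ga th s) - sumR (pk2 P) (fun s => pd P s * mu th s).

Definition fobj (P : prob) (th : theta) : R :=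
  / 2 * sumR (pp P) (fun c => wvec P th c * wvec P th c) + linp P th.

Definition tadd (th : theta) (t : R) (D : theta) : theta :=
  Theta (fun s => al th s + t * al D s) (fun s => als th s + t * als D s)
        (fun s => ga th s + t * ga D s) (fun s => mu th s + t * mu D s).

Definition slope (P : prob) (th D : theta) : R :=
  sumR (pp P) (fun c => wvec P th c * wvec P D c) + linp P D.

Definition curv (P : prob) (D : theta) : R :=
  sumR (pp P) (fun c => wvec P D c * wvec P D c).

Lemma wvec_tadd P th t D c : wvec P (tadd th t D) c = wvec P th c + t * wvec P D c.
Proof. unfold wvec, tadd; simpl. rewrite !sumR_lin. ring. Qed.

Lemma linp_tadd P th t D : linp P (tadd th t D) = linp P th + t * linp P D.
Proof.
  unfold linp, tadd; simpl. rewrite !sumR_lin.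
  rewrite (sumR_ext (pn P) _
    (fun i => py P i * ((al th i - als th i) + t * (al D i - als D i)))) by (intros; ring).
  rewrite sumR_lin. ring.
Qed.

Lemma fobj_tadd P th t D :
  fobj P (tadd th t D) = fobj P th + t * slope P th D + / 2 * (t * t) * curv P D.
Proof.
  unfold fobj, slope, curv. rewrite linp_tadd.
  rewrite (sumR_ext _ _ (fun c => wvec P th c * wvec P th c +
     t * (2 * (wvec P th c * wvec P D c) + t * (wvec P D c * wvec P D c))))
    by (intros; rewrite wvec_tadd; ring).
  rewrite sumR_add, sumR_scal, sumR_add, sumR_scal, sumR_scal. field.
Qed.

Lemma wvec_pairing P th b :
  sumR (pp P) (fun c => wvec P th c * b c) =
  sumR (pn P) (fun i => al th i * sumR (pp P) (fun c => pX P i c * b c))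
  - sumR (pn P) (fun i => als th i * sumR (pp P) (fun c => pX P i c * b c))
  + sumR (pk1 P) (fun s => ga th s * sumR (pp P) (fun c => pA P s c * b c))
  - sumR (pk2 P) (fun s => mu th s * sumR (pp P) (fun c => pG P s c * b c)).
Proof.
  unfold wvec.
  rewrite (sumR_ext _ _ (fun c =>
     sumR (pn P) (fun i => pX P i c * al th i) * b c
   - sumR (pn P) (fun i => pX P i c * als th i) * b c
   + sumR (pk1 P) (fun s => pA P s c * ga th s) * b c
   - sumR (pk2 P) (fun s => pG P s c * mu th s) * b c)) by (intros; ring).
  rewrite !sumR_sub, sumR_add, sumR_sub, !sumR_pairing_swap. reflexivity.
Qed.

Lemma slope_grad P th D :
  slope P th D =
  sumR (pn P) (fun i => grad_al P th i * al D i) + sumR (pn P) (fun i => grad_als P th i * als D i)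
  + sumR (pk1 P) (fun s => grad_ga P th s * ga D s) + sumR (pk2 P) (fun s => grad_mu P th s * mu D s).
Proof.
  unfold slope, linp.
  rewrite (sumR_ext _ _ (fun c => wvec P D c * wvec P th c)) by (intros; ring).
  rewrite wvec_pairing. unfold grad_al, grad_als, grad_ga, grad_mu.
  set (Xw := fun i => sumR (pp P) (fun c => pX P i c * wvec P th c)).
  set (Aw := fun s => sumR (pp P) (fun c => pA P s c * wvec P th c)).
  set (Gw := fun s => sumR (pp P) (fun c => pG P s c * wvec P th c)).
  assert (Eal : sumR (pn P) (fun i => (Xw i + py P i) * al D i) +
                sumR (pn P) (fun i => (- Xw i - py P i) * als D i) =
                sumR (pn P) (fun i => al D i * Xw i) - sumR (pn P) (fun i => als D i * Xw i)
                + sumR (pn P) (fun i => py P i * (al D i - als D i))).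
  { rewrite <- sumR_sub, <- !sumR_add. apply sumR_ext; intros; ring. }
  assert (Ega : sumR (pk1 P) (fun s => (Aw s + pb P s) * ga D s) =
                sumR (pk1 P) (fun s => ga D s * Aw s) + sumR (pk1 P) (fun s => pb P s * ga D s)).
  { rewrite <- sumR_add. apply sumR_ext; intros; ring. }
  assert (Emu : sumR (pk2 P) (fun s => (- Gw s - pd P s) * mu D s) =
                - sumR (pk2 P) (fun s => mu D s * Gw s) - sumR (pk2 P) (fun s => pd P s * mu D s)).
  { rewrite (sumR_ext _ _ (fun s => - (mu D s * Gw s) - pd P s * mu D s)) by (intros; ring).
    rewrite sumR_sub, sumR_opp. reflexivity. }
  unfold Xw, Aw, Gw in *. lra.
Qed.

Definition pair_curv (P : prob) (i j : nat) : R := Qm P i i + Qm P j j - 2 * Qm P i j.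

Lemma pair_curv_sq P i j :
  pair_curv P i j = sumR (pp P) (fun c => (pX P i c - pX P j c) * (pX P i c - pX P j c)).
Proof.
  unfold pair_curv, Qm. rewrite <- sumR_scal, <- sumR_add, <- sumR_sub.
  apply sumR_ext; intros; ring.
Qed.

Lemma pair_upd_tadd a i j t : i <> j ->
  pair_upd a i j t = fun s => a s + t * (ind i s - ind j s).
Proof.
  intros Hij. apply functional_extensionality; intros s. unfold pair_upd, ind.
  destruct (Nat.eqb_spec s i), (Nat.eqb_spec s j); subst; try ring; congruence.
Qed.

Lemma upd1_tadd a u v : upd1 a u v = fun s => a s + (v - a u) * ind u s.
Proof.
  apply functional_extensionality; intros s. unfold upd1, ind.
  destruct (Nat.eqb_spec s u); subst; ring.
Qed.

Lemma fobj_update_al P th i j t : (i < pn P)%nat -> (j < pn P)%nat -> i <> j ->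
  fobj P (Theta (pair_upd (al th) i j t) (als th) (ga th) (mu th)) =
  fobj P th + t * (grad_al P th i - grad_al P th j) + / 2 * (t * t) * pair_curv P i j.
Proof.
  intros Hi Hj Hij.
  set (D := Theta (fun s => ind i s - ind j s) (fun _ => 0) (fun _ => 0) (fun _ => 0)).
  replace (Theta _ _ _ _) with (tadd th t D).
  2:{ unfold tadd; simpl. rewrite pair_upd_tadd by auto.
      f_equal; apply functional_extensionality; intros; ring. }
  rewrite fobj_tadd, slope_grad, pair_curv_sq. unfold curv, wvec; simpl.
  rewrite sumR_ind_sub, !sumR_mul0 by auto.
  rewrite (sumR_ext (pp P) _ (fun c => (pX P i c - pX P j c) * (pX P i c - pX P j c))).
  - ring.
  - intros. rewrite sumR_ind_sub, !sumR_mul0 by auto. ring.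
Qed.

Lemma fobj_update_als P th i j t : (i < pn P)%nat -> (j < pn P)%nat -> i <> j ->
  fobj P (Theta (al th) (pair_upd (als th) i j t) (ga th) (mu th)) =
  fobj P th + t * (grad_als P th i - grad_als P th j) + / 2 * (t * t) * pair_curv P i j.
Proof.
  intros Hi Hj Hij.
  set (D := Theta (fun _ => 0) (fun s => ind i s - ind j s) (fun _ => 0) (fun _ => 0)).
  replace (Theta _ _ _ _) with (tadd th t D).
  2:{ unfold tadd; simpl. rewrite pair_upd_tadd by auto.
      f_equal; apply functional_extensionality; intros; ring. }
  rewrite fobj_tadd, slope_grad, pair_curv_sq. unfold curv, wvec; simpl.
  rewrite sumR_ind_sub, !sumR_mul0 by auto.
  rewrite (sumR_ext (pp P) _ (fun c => (pX P i c - pX P j c) * (pX P i c - pX P j c))).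
  - ring.
  - intros. rewrite sumR_ind_sub, !sumR_mul0 by auto. ring.
Qed.

Lemma fobj_update_ga P th u v : (u < pk1 P)%nat ->
  fobj P (Theta (al th) (als th) (upd1 (ga th) u v) (mu th)) =
  fobj P th + (v - ga th u) * grad_ga P th u + / 2 * ((v - ga th u) * (v - ga th u)) * AAt P u u.
Proof.
  intros Hu.
  set (D := Theta (fun _ => 0) (fun _ => 0) (fun s => ind u s) (fun _ => 0)).
  replace (Theta _ _ _ _) with (tadd th (v - ga th u) D).
  2:{ unfold tadd; simpl. rewrite upd1_tadd.
      f_equal; apply functional_extensionality; intros; ring. }
  rewrite fobj_tadd, slope_grad. unfold curv, AAt, wvec; simpl.
  rewrite sumR_ind, !sumR_mul0 by auto.
  rewrite (sumR_ext (pp P) _ (fun c => pA P u c * pA P u c)).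
  - ring.
  - intros. rewrite sumR_ind, !sumR_mul0 by auto. ring.
Qed.

Lemma fobj_update_mu P th u v : (u < pk2 P)%nat ->
  fobj P (Theta (al th) (als th) (ga th) (upd1 (mu th) u v)) =
  fobj P th + (v - mu th u) * grad_mu P th u + / 2 * ((v - mu th u) * (v - mu th u)) * GGt P u u.
Proof.
  intros Hu.
  set (D := Theta (fun _ => 0) (fun _ => 0) (fun _ => 0) (fun s => ind u s)).
  replace (Theta _ _ _ _) with (tadd th (v - mu th u) D).
  2:{ unfold tadd; simpl. rewrite upd1_tadd.
      f_equal; apply functional_extensionality; intros; ring. }
  rewrite fobj_tadd, slope_grad. unfold curv, GGt, wvec; simpl.
  rewrite sumR_ind, !sumR_mul0 by auto.
  rewrite (sumR_ext (pp P) _ (fun c => pG P u c * pG P u c)).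
  - ring.
  - intros. rewrite sumR_ind, !sumR_mul0 by auto. ring.
Qed.

Lemma quad_step_nonpos t G q : 0 < q -> (0 <= t <= - G / q \/ - G / q <= t <= 0) ->
  t * G + / 2 * (t * t) * q <= 0.
Proof.
  intros Hq Ht. set (x := - G / q) in Ht.
  assert (HG : G = - q * x) by (unfold x; field; lra).
  clearbody x. subst G.
  assert (t * (t - 2 * x) <= 0) by (destruct Ht; nra).
  nra.
Qed.

Lemma quad_step_exact G q B : 0 < q <= B ->
  G * G / (2 * B) <= - ((- G / q) * G + / 2 * ((- G / q) * (- G / q)) * q).
Proof.
  intros [Hq HB].
  replace (- _) with (G * G / (2 * q)) by (field; lra).
  unfold Rdiv. apply Rmult_le_compat_l; [nra|].
  apply Rinv_le_contravar; lra.
Qed.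

Lemma clamp_bounds lo hi x : lo <= 0 -> 0 <= hi ->
  lo <= Rmin (Rmax lo x) hi <= hi /\
  (0 <= Rmin (Rmax lo x) hi <= x \/ x <= Rmin (Rmax lo x) hi <= 0).
Proof. intros. unfold Rmin, Rmax; repeat destruct Rle_dec; lra. Qed.

Lemma lmin_spec l m : lmin l = Some m -> In m l /\ forall x, In x l -> m <= x.
Proof.
  revert m; induction l as [|a r IH]; simpl; intros m H; [discriminate|].
  destruct (lmin r) as [m'|] eqn:E; injection H as <-.
  - destruct (IH m' eq_refl) as [Hin Hle]. split.
    + unfold Rmin; destruct Rle_dec; auto.
    + intros x [<- | Hx]; [apply Rmin_l|]. pose proof (Hle x Hx). pose proof (Rmin_r a m'). lra.
  - destruct r as [|b r]; [split; [now left | intros x [<- | []]; lra]|].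
    simpl in E. destruct (lmin r); discriminate.
Qed.

Lemma lmax_spec l m : lmax l = Some m -> In m l /\ forall x, In x l -> x <= m.
Proof.
  revert m; induction l as [|a r IH]; simpl; intros m H; [discriminate|].
  destruct (lmax r) as [m'|] eqn:E; injection H as <-.
  - destruct (IH m' eq_refl) as [Hin Hle]. split.
    + unfold Rmax; destruct Rle_dec; auto.
    + intros x [<- | Hx]; [apply Rmax_l|]. pose proof (Hle x Hx). pose proof (Rmax_r a m'). lra.
  - destruct r as [|b r]; [split; [now left | intros x [<- | []]; lra]|].
    simpl in E. destruct (lmax r); discriminate.
Qed.

Lemma lmin_least l x : In x l -> (forall y, In y l -> x <= y) -> lmin l = Some x.
Proof.
  intros Hx Hle. destruct (lmin l) as [m|] eqn:E.
  - destruct (lmin_spec l m E) as [Hm Hmle]. f_equal.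
    pose proof (Hle m Hm). pose proof (Hmle x Hx). lra.
  - destruct l as [|a r]; [destruct Hx | simpl in E; destruct (lmin r); discriminate].
Qed.

Lemma lmax_greatest l x : In x l -> (forall y, In y l -> y <= x) -> lmax l = Some x.
Proof.
  intros Hx Hle. destruct (lmax l) as [m|] eqn:E.
  - destruct (lmax_spec l m E) as [Hm Hmle]. f_equal.
    pose proof (Hle m Hm). pose proof (Hmle x Hx). lra.
  - destruct l as [|a r]; [destruct Hx | simpl in E; destruct (lmax r); discriminate].
Qed.

Lemma In_filter_seq_lt (p : nat -> bool) n i :
  In i (filter p (seq 0 n)) <-> (i < n)%nat /\ p i = true.
Proof. rewrite filter_In, in_seq. split; intros [H1 H2]; split; auto; lia. Qed.

Lemma Rltb_true x y : Rltb x y = true <-> x < y.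
Proof. unfold Rltb; destruct Rlt_dec; split; intros; auto; discriminate. Qed.

Lemma Delta_pair_val P a g i j : is_argmin_up P a g i -> is_argmax_low P a g j ->
  0 < Delta_pair P a g -> Delta_pair P a g = g j - g i.
Proof.
  intros [Hi [Hai Hmin]] [Hj [Haj Hmax]]. unfold Delta_pair, I_up, I_low.
  rewrite (lmin_least _ (g i)), (lmax_greatest _ (g j)).
  - unfold Rmax; destruct Rle_dec; lra.
  - apply in_map, In_filter_seq_lt. rewrite Rltb_true. auto.
  - intros y Hy. apply in_map_iff in Hy as [x [<- Hx]].
    apply In_filter_seq_lt in Hx as [Hx Hax]. apply Rltb_true in Hax. auto.
  - apply in_map, In_filter_seq_lt. rewrite Rltb_true. auto.
  - intros y Hy. apply in_map_iff in Hy as [x [<- Hx]].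
    apply In_filter_seq_lt in Hx as [Hx Hax]. apply Rltb_true in Hax. auto.
Qed.

Lemma Delta3_val P th u : (u < pk1 P)%nat ->
  (forall s, (s < pk1 P)%nat -> grad_ga P th u <= grad_ga P th s) ->
  0 < Delta3 P th -> Delta3 P th = - grad_ga P th u.
Proof.
  intros Hu Hmin. unfold Delta3. rewrite (lmin_least _ (grad_ga P th u)).
  - unfold Rmax; destruct Rle_dec; lra.
  - apply in_map, in_seq; lia.
  - intros y Hy. apply in_map_iff in Hy as [x [<- Hx]]. apply in_seq in Hx. apply Hmin; lia.
Qed.

Lemma Delta4_val P th u : (u < pk2 P)%nat ->
  (forall s, (s < pk2 P)%nat -> Rabs (grad_mu P th s) <= Rabs (grad_mu P th u)) ->
  Delta4 P th = Rabs (grad_mu P th u).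
Proof.
  intros Hu Hmax. unfold Delta4. rewrite (lmax_greatest _ (Rabs (grad_mu P th u))); auto.
  - apply (in_map (fun s => Rabs (grad_mu P th s))), in_seq; lia.
  - intros y Hy. apply in_map_iff in Hy as [x [<- Hx]]. apply in_seq in Hx. apply Hmax; lia.
Qed.

Lemma Delta_pair_nonneg P a g : 0 <= Delta_pair P a g.
Proof.
  unfold Delta_pair.
  destruct (lmin (map g (I_up P a))), (lmax (map g (I_low P a))); try apply Rmax_r; apply Rle_refl.
Qed.

Lemma Deltas_bounds P th :
  0 <= Delta1 P th <= DeltaK P th /\ 0 <= Delta2 P th <= DeltaK P th /\
  0 <= Delta3 P th <= DeltaK P th /\ 0 <= Delta4 P th <= DeltaK P th.
Proof.
  assert (H1 : 0 <= Delta1 P th) by apply Delta_pair_nonneg.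
  assert (H2 : 0 <= Delta2 P th) by apply Delta_pair_nonneg.
  assert (H3 : 0 <= Delta3 P th) by (unfold Delta3; destruct lmin; [apply Rmax_r | lra]).
  assert (H4 : 0 <= Delta4 P th).
  { unfold Delta4. destruct lmax as [M|] eqn:E; [|lra].
    apply lmax_spec in E as [E _]. apply in_map_iff in E as [x [<- _]]. apply Rabs_pos. }
  unfold DeltaK.
  pose proof (Rmax_l (Delta1 P th) (Delta2 P th)). pose proof (Rmax_r (Delta1 P th) (Delta2 P th)).
  pose proof (Rmax_l (Delta3 P th) (Delta4 P th)). pose proof (Rmax_r (Delta3 P th) (Delta4 P th)).
  pose proof (Rmax_l (Rmax (Delta1 P th) (Delta2 P th)) (Rmax (Delta3 P th) (Delta4 P th))).
  pose proof (Rmax_r (Rmax (Delta1 P th) (Delta2 P th)) (Rmax (Delta3 P th) (Delta4 P th))).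
  lra.
Qed.

Lemma pair_line_step P a g i j f f' B :
  (forall s, (s < pn P)%nat -> 0 <= a s <= Cn P) -> (i < pn P)%nat -> (j < pn P)%nat ->
  0 < pair_curv P i j <= B ->
  f' = f + tstar P a g i j * (g i - g j)
         + / 2 * (tstar P a g i j * tstar P a g i j) * pair_curv P i j ->
  (forall s, (s < pn P)%nat -> 0 <= pair_upd a i j (tstar P a g i j) s <= Cn P) /\
  f' <= f /\
  (tstar P a g i j = tq P g i j -> (g j - g i) * (g j - g i) / (2 * B) <= f - f').
Proof.
  intros Ha Hi Hj Hq Hf.
  pose proof (Ha i Hi). pose proof (Ha j Hj).
  set (lo := Rmax (- a i) (a j - Cn P)). set (hi := Rmin (a j) (Cn P - a i)).
  assert (Hlo : lo <= 0) by (apply Rmax_lub; lra).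
  assert (Hhi : 0 <= hi) by (apply Rmin_glb; lra).
  destruct (clamp_bounds lo hi (- (g i - g j) / pair_curv P i j) Hlo Hhi) as [Hrange Hbetween].
  change (Rmin (Rmax lo _) hi) with (tstar P a g i j) in Hrange, Hbetween.
  set (t := tstar P a g i j) in *.
  split; [|split].
  - intros s Hs. pose proof (Ha s Hs).
    pose proof (Rmax_l (- a i) (a j - Cn P)). pose proof (Rmax_r (- a i) (a j - Cn P)).
    pose proof (Rmin_l (a j) (Cn P - a i)). pose proof (Rmin_r (a j) (Cn P - a i)).
    unfold pair_upd, lo, hi in *.
    destruct (Nat.eqb_spec s i), (Nat.eqb_spec s j); lra.
  - pose proof (quad_step_nonpos t (g i - g j) _ (proj1 Hq) Hbetween). lra.
  - intros Htq. change (tq P g i j) with (- (g i - g j) / pair_curv P i j) in Htq.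
    rewrite Htq in Hf.
    pose proof (quad_step_exact (g i - g j) _ B Hq).
    replace ((g j - g i) * (g j - g i)) with ((g i - g j) * (g i - g j)) by ring.
    lra.
Qed.

Definition in_box (P : prob) (th : theta) : Prop :=
  (forall i, (i < pn P)%nat -> 0 <= al th i <= Cn P /\ 0 <= als th i <= Cn P) /\
  (forall s, (s < pk1 P)%nat -> 0 <= ga th s).

Definition curv_bound (P : prob) : R :=
  sumR (pn P) (fun i => sumR (pn P) (fun j => pair_curv P i j)) +
  sumR (pk1 P) (fun u => AAt P u u) + sumR (pk2 P) (fun u => GGt P u u) + 1.

Lemma pair_curv_nonneg P i j : 0 <= pair_curv P i j.
Proof. rewrite pair_curv_sq. apply sumR_sq_nonneg. Qed.

Lemma curv_bound_parts P :
  0 <= sumR (pn P) (fun i => sumR (pn P) (fun j => pair_curv P i j)) /\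
  0 <= sumR (pk1 P) (fun u => AAt P u u) /\ 0 <= sumR (pk2 P) (fun u => GGt P u u).
Proof.
  repeat split; apply sumR_nonneg; intros;
    [apply sumR_nonneg; intros; apply pair_curv_nonneg | apply sumR_sq_nonneg ..].
Qed.

Lemma curv_bound_pos P : 0 < curv_bound P.
Proof. pose proof (curv_bound_parts P). unfold curv_bound. lra. Qed.

Lemma pair_curv_le_bound P i j : (i < pn P)%nat -> (j < pn P)%nat ->
  pair_curv P i j <= curv_bound P.
Proof.
  intros Hi Hj. pose proof (curv_bound_parts P). unfold curv_bound.
  pose proof (sumR_term_le (pn P) (fun j => pair_curv P i j) j
    ltac:(intros; apply pair_curv_nonneg) Hj).
  pose proof (sumR_term_le (pn P) (fun i => sumR (pn P) (fun j => pair_curv P i j)) i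
    ltac:(intros; apply sumR_nonneg; intros; apply pair_curv_nonneg) Hi).
  simpl in *. lra.
Qed.

Lemma AAt_le_bound P u : (u < pk1 P)%nat -> AAt P u u <= curv_bound P.
Proof.
  intros Hu. pose proof (curv_bound_parts P). unfold curv_bound.
  pose proof (sumR_term_le (pk1 P) (fun u => AAt P u u) u ltac:(intros; apply sumR_sq_nonneg) Hu).
  simpl in *. lra.
Qed.

Lemma GGt_le_bound P u : (u < pk2 P)%nat -> GGt P u u <= curv_bound P.
Proof.
  intros Hu. pose proof (curv_bound_parts P). unfold curv_bound.
  pose proof (sumR_term_le (pk2 P) (fun u => GGt P u u) u ltac:(intros; apply sumR_sq_nonneg) Hu).
  simpl in *. lra.
Qed.

Definition descent (P : prob) (th th' : theta) (unclipped : Prop) (D : R) : Prop :=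
  in_box P th' /\ fobj P th' <= fobj P th /\
  (unclipped -> D * D / (2 * curv_bound P) <= fobj P th - fobj P th').

Lemma descent_weaken P th th' U U' D :
  (U' -> U) -> descent P th th' U D -> descent P th th' U' D.
Proof. intros HU [Hbox [Hle Hdec]]. split; [|split]; auto. Qed.

Section Iteration.

Variable P : prob.
Hypothesis X_rows_distinct : forall i j, (i < pn P)%nat -> (j < pn P)%nat -> i <> j ->
  exists c, (c < pp P)%nat /\ pX P i c <> pX P j c.
Hypothesis A_rows_nonzero : forall s, (s < pk1 P)%nat -> exists c, (c < pp P)%nat /\ pA P s c <> 0.
Hypothesis G_rows_nonzero : forall s, (s < pk2 P)%nat -> exists c, (c < pp P)%nat /\ pG P s c <> 0.

Lemma pair_curv_pos i j : (i < pn P)%nat -> (j < pn P)%nat -> i <> j ->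
  0 < pair_curv P i j <= curv_bound P.
Proof.
  intros Hi Hj Hij. split; [|apply pair_curv_le_bound; auto].
  destruct (X_rows_distinct i j Hi Hj Hij) as [c [Hc Hne]].
  rewrite pair_curv_sq. apply (sumR_sq_pos _ (fun c => pX P i c - pX P j c) c Hc). lra.
Qed.

Lemma AAt_pos u : (u < pk1 P)%nat -> 0 < AAt P u u <= curv_bound P.
Proof.
  intros Hu. split; [|apply AAt_le_bound; auto].
  destruct (A_rows_nonzero u Hu) as [c [Hc Hne]]. apply (sumR_sq_pos _ (pA P u) c Hc Hne).
Qed.

Lemma GGt_pos u : (u < pk2 P)%nat -> 0 < GGt P u u <= curv_bound P.
Proof.
  intros Hu. split; [|apply GGt_le_bound; auto].
  destruct (G_rows_nonzero u Hu) as [c [Hc Hne]]. apply (sumR_sq_pos _ (pG P u) c Hc Hne).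
Qed.

Lemma alpha_step th i j :
  in_box P th -> 0 < Delta1 P th ->
  is_argmin_up P (al th) (grad_al P th) i -> is_argmax_low P (al th) (grad_al P th) j ->
  descent P th
    (Theta (pair_upd (al th) i j (tstar P (al th) (grad_al P th) i j)) (als th) (ga th) (mu th))
    (tstar P (al th) (grad_al P th) i j = tq P (grad_al P th) i j) (Delta1 P th).
Proof.
  intros [Hab Hga] HD Hi Hj.
  assert (HDv : Delta1 P th = grad_al P th j - grad_al P th i) by (apply Delta_pair_val; auto).
  assert (Hij : i <> j) by (intros ->; lra).
  destruct Hi as [Hi _], Hj as [Hj _].
  destruct (pair_line_step P (al th) (grad_al P th) i j (fobj P th) _ (curv_bound P)
              (fun s Hs => proj1 (Hab s Hs)) Hi Hj (pair_curv_pos i j Hi Hj Hij)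
              (fobj_update_al P th i j _ Hi Hj Hij)) as [Hbox [Hle Hdec]].
  split; [split | split]; simpl; auto.
  - intros s Hs. split; [apply Hbox | apply Hab]; auto.
  - rewrite HDv. exact Hdec.
Qed.

Lemma alphas_step th i j :
  in_box P th -> 0 < Delta2 P th ->
  is_argmin_up P (als th) (grad_als P th) i -> is_argmax_low P (als th) (grad_als P th) j ->
  descent P th
    (Theta (al th) (pair_upd (als th) i j (tstar P (als th) (grad_als P th) i j)) (ga th) (mu th))
    (tstar P (als th) (grad_als P th) i j = tq P (grad_als P th) i j) (Delta2 P th).
Proof.
  intros [Hab Hga] HD Hi Hj.
  assert (HDv : Delta2 P th = grad_als P th j - grad_als P th i) by (apply Delta_pair_val; auto).
  assert (Hij : i <> j) by (intros ->; lra).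
  destruct Hi as [Hi _], Hj as [Hj _].
  destruct (pair_line_step P (als th) (grad_als P th) i j (fobj P th) _ (curv_bound P)
              (fun s Hs => proj2 (Hab s Hs)) Hi Hj (pair_curv_pos i j Hi Hj Hij)
              (fobj_update_als P th i j _ Hi Hj Hij)) as [Hbox [Hle Hdec]].
  split; [split | split]; simpl; auto.
  - intros s Hs. split; [apply Hab | apply Hbox]; auto.
  - rewrite HDv. exact Hdec.
Qed.

Lemma gamma_step th u :
  in_box P th -> (u < pk1 P)%nat ->
  (forall s, (s < pk1 P)%nat -> grad_ga P th u <= grad_ga P th s) -> 0 < Delta3 P th ->
  descent P th
    (Theta (al th) (als th)
       (upd1 (ga th) u (Rmax (ga th u - grad_ga P th u / AAt P u u) 0)) (mu th))
    (~ ga th u - grad_ga P th u / AAt P u u < 0) (Delta3 P th).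
Proof.
  intros [Hab Hga] Hu Hmin HD.
  pose proof (Delta3_val P th u Hu Hmin HD) as HDv.
  destruct (AAt_pos u Hu) as [Ha HaB]. pose proof (Hga u Hu).
  unfold descent. rewrite (fobj_update_ga P th u _ Hu).
  set (g := grad_ga P th u) in *. set (a := AAt P u u) in *.
  set (v := ga th u - g / a).
  assert (Hga_opp : - g / a = - (g / a)) by (field; lra).
  split; [split | split]; simpl; auto.
  - intros s Hs. unfold upd1. destruct (Nat.eqb_spec s u); [apply Rmax_r | auto].
  - assert (Hbetween : 0 <= Rmax v 0 - ga th u <= - g / a \/ - g / a <= Rmax v 0 - ga th u <= 0)
      by (unfold v, Rmax; destruct Rle_dec; lra).
    pose proof (quad_step_nonpos _ g a Ha Hbetween). lra.
  - intros Hv. rewrite Rmax_left by lra.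
    replace (v - ga th u) with (- g / a) by (unfold v; field; lra).
    rewrite HDv. replace (- g * - g) with (g * g) by ring.
    pose proof (quad_step_exact g a _ (conj Ha HaB)). lra.
Qed.

Lemma mu_step th u :
  in_box P th -> (u < pk2 P)%nat ->
  (forall s, (s < pk2 P)%nat -> Rabs (grad_mu P th s) <= Rabs (grad_mu P th u)) ->
  descent P th
    (Theta (al th) (als th) (ga th) (upd1 (mu th) u (mu th u - grad_mu P th u / GGt P u u)))
    True (Delta4 P th).
Proof.
  intros Hbox Hu Hmax.
  pose proof (Delta4_val P th u Hu Hmax) as HDv.
  destruct (GGt_pos u Hu) as [Ha HaB].
  unfold descent. rewrite (fobj_update_mu P th u _ Hu).
  set (g := grad_mu P th u) in *. set (a := GGt P u u) in *.
  replace (mu th u - g / a - mu th u) with (- g / a) by (unfold Rdiv; ring).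
  pose proof (quad_step_exact g a _ (conj Ha HaB)).
  split; [exact Hbox | split].
  - pose proof (curv_bound_pos P).
    assert (0 <= g * g / (2 * curv_bound P))
      by (apply Rmult_le_pos; [nra | left; apply Rinv_0_lt_compat; lra]).
    lra.
  - intros _. rewrite HDv, <- Rabs_mult, Rabs_pos_eq by nra. lra.
Qed.

Lemma smo_iter_descent th th' cl :
  in_box P th -> smo_iter P 0 th th' cl -> descent P th th' (cl = false) (DeltaK P th).
Proof.
  intros Hbox [Hpos Hblk].
  destruct Hblk as [[HD [i [j [Hi [Hj [-> Hcl]]]]]] |
                   [[_ [HD [i [j [Hi [Hj [-> Hcl]]]]]]] |
                   [[_ [_ [HD [u [Hu [Hmin [-> Hcl]]]]]]] |
                    [_ [_ [_ [HD [u [Hu [Hmax [-> Hcl]]]]]]]]]]];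
    rewrite <- HD in *.
  - eapply descent_weaken; [| apply alpha_step; auto].
    intros Hc. apply NNPP. intros Hn. apply Hcl in Hn. congruence.
  - eapply descent_weaken; [| apply alphas_step; auto].
    intros Hc. apply NNPP. intros Hn. apply Hcl in Hn. congruence.
  - eapply descent_weaken; [| apply gamma_step; auto].
    intros Hc Hv. apply Hcl in Hv. congruence.
  - eapply descent_weaken; [| apply mu_step; auto]. auto.
Qed.

End Iteration.

Lemma box_pairing_lb C x y r : 0 <= x <= C -> 0 <= y <= C -> - (C * Rabs r) <= (x - y) * r.
Proof. intros. unfold Rabs; destruct Rcase_abs; nra. Qed.

Section LowerBound.

Variables (P : prob) (beta : nat -> R).
Hypothesis A_beta_le_b :
  forall s, (s < pk1 P)%nat -> sumR (pp P) (fun c => pA P s c * beta c) <= pb P s.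
Hypothesis G_beta_eq_d :
  forall s, (s < pk2 P)%nat -> sumR (pp P) (fun c => pG P s c * beta c) = pd P s.

Definition dual_lower_bound : R :=
  - / 2 * sumR (pp P) (fun c => beta c * beta c)
  - sumR (pn P) (fun i => Cn P * Rabs (py P i - sumR (pp P) (fun c => pX P i c * beta c))).

Lemma fobj_ge_dual_lower_bound th : in_box P th -> dual_lower_bound <= fobj P th.
Proof.
  intros [Hab Hga]. unfold fobj, dual_lower_bound, linp.
  pose proof (wvec_pairing P th beta) as Hw.
  set (Xb := fun i => sumR (pp P) (fun c => pX P i c * beta c)) in *.
  assert (Hsq : - / 2 * sumR (pp P) (fun c => beta c * beta c) <=
     / 2 * sumR (pp P) (fun c => wvec P th c * wvec P th c) + sumR (pp P) (fun c => wvec P th c * beta c)).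
  { rewrite <- !sumR_scal, <- sumR_add. apply sumR_le; intros s _.
    pose proof (Rle_0_sqr (wvec P th s + beta s)). unfold Rsqr in *. lra. }
  assert (Hy : sumR (pn P) (fun i => py P i * (al th i - als th i)) =
     sumR (pn P) (fun i => al th i * Xb i) - sumR (pn P) (fun i => als th i * Xb i) +
     sumR (pn P) (fun i => (al th i - als th i) * (py P i - Xb i))).
  { rewrite <- sumR_sub, <- sumR_add. apply sumR_ext; intros; ring. }
  assert (Hbox : - sumR (pn P) (fun i => Cn P * Rabs (py P i - Xb i)) <=
     sumR (pn P) (fun i => (al th i - als th i) * (py P i - Xb i))).
  { rewrite <- sumR_opp. apply sumR_le; intros s Hs.
    destruct (Hab s Hs). apply box_pairing_lb; auto. }
  assert (Hb : sumR (pk1 P) (fun s => ga th s * sumR (pp P) (fun c => pA P s c * beta c)) <=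
     sumR (pk1 P) (fun s => pb P s * ga th s)).
  { apply sumR_le; intros s Hs. pose proof (Hga s Hs). pose proof (A_beta_le_b s Hs). nra. }
  assert (Hd : sumR (pk2 P) (fun s => pd P s * mu th s) =
     sumR (pk2 P) (fun s => mu th s * sumR (pp P) (fun c => pG P s c * beta c))).
  { apply sumR_ext; intros s Hs. rewrite G_beta_eq_d; auto; ring. }
  unfold Xb in *. lra.
Qed.

End LowerBound.

Lemma conv0_along_of_decrease (K : nat -> Prop) (f d : nat -> R) (L c : R) :
  0 < c -> (forall k, f (S k) <= f k) -> (forall k, L <= f k) ->
  (forall k, K k -> c * (d k * d k) <= f k - f (S k)) -> conv0_along K d.
Proof.
  intros Hc Hmono Hlb Hdec eps Heps. apply NNPP; intro Hnot.
  assert (Hoften : forall N, exists k, (N <= k)%nat /\ K k /\ eps <= Rabs (d k)).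
  { intros N. apply NNPP; intro Hn. apply Hnot. exists N. intros k Hk HKk.
    apply Rnot_le_lt. intro He. apply Hn. eauto. }
  assert (Hanti : forall N k, (N <= k)%nat -> f k <= f N).
  { intros N k Hk. induction Hk; [lra | specialize (Hmono m); lra]. }
  assert (Hdrop : forall m, exists N, f N <= f 0%nat - INR m * (c * (eps * eps))).
  { induction m as [|m [N HN]]; [exists 0%nat; simpl; lra|].
    destruct (Hoften N) as [k [Hk [HKk He]]].
    exists (S k). rewrite S_INR.
    assert (eps * eps <= d k * d k).
    { rewrite <- (Rabs_pos_eq (d k * d k)), Rabs_mult by nra.
      apply Rmult_le_compat; lra. }
    pose proof (Hdec k HKk). pose proof (Hanti N k Hk).
    nra. }
  destruct (INR_unbounded ((f 0%nat - L) / (c * (eps * eps)))) as [m Hm].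
  destruct (Hdrop m) as [N HN]. pose proof (Hlb N).
  assert (0 < c * (eps * eps)) by (apply Rmult_lt_0_compat; [lra | nra]).
  assert (f 0%nat - L < INR m * (c * (eps * eps))).
  { apply (Rmult_lt_compat_r (c * (eps * eps))) in Hm; auto.
    unfold Rdiv in Hm. rewrite Rmult_assoc, Rinv_l, Rmult_1_r in Hm; lra. }
  lra.
Qed.

Lemma conv0_along_squeeze (K : nat -> Prop) (u v : nat -> R) :
  conv0_along K u -> (forall k, 0 <= v k <= u k) -> conv0_along K v.
Proof.
  intros Hu Hv eps Heps. destruct (Hu eps Heps) as [N HN]. exists N. intros k Hk HKk.
  specialize (HN k Hk HKk). destruct (Hv k).
  rewrite Rabs_pos_eq in * by lra. lra.
Qed.

Theorem lemmaD4 (P : prob) (th : nat -> theta) (cl : nat -> bool) (K : nat -> Prop) :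
  (1 <= pn P)%nat -> (1 <= pp P)%nat -> (1 <= pk1 P)%nat -> (1 <= pk2 P)%nat ->
  0 < pC P -> 0 < pnu P <= 1 ->
  (* rows of X pairwise distinct *)
  (forall i j, (i < pn P)%nat -> (j < pn P)%nat -> i <> j ->
     exists c, (c < pp P)%nat /\ pX P i c <> pX P j c) ->
  (* no row of A or Gamma is zero *)
  (forall s, (s < pk1 P)%nat -> exists c, (c < pp P)%nat /\ pA P s c <> 0) ->
  (forall s, (s < pk2 P)%nat -> exists c, (c < pp P)%nat /\ pG P s c <> 0) ->
  (* {beta : A beta <= b, Gamma beta = d} is nonempty *)
  (exists beta : nat -> R,
     (forall s, (s < pk1 P)%nat -> sumR (pp P) (fun c => pA P s c * beta c) <= pb P s) /\
     (forall s, (s < pk2 P)%nat -> sumR (pp P) (fun c => pG P s c * beta c) = pd P s)) ->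
  feasible P (th 0%nat) ->
  (* the algorithm with tau = 0 never stops; iteration k maps th k to th (k+1) *)
  (forall k, smo_iter P 0 (th k) (th (S k)) (cl k)) ->
  (* K infinite, consisting of unclipped iterations *)
  (forall N, exists k, (N <= k)%nat /\ K k) ->
  (forall k, K k -> cl k = false) ->
  conv0_along K (fun k => DeltaK P (th k)) /\
  conv0_along K (fun k => Delta1 P (th k)) /\
  conv0_along K (fun k => Delta2 P (th k)) /\
  conv0_along K (fun k => Delta3 P (th k)) /\
  conv0_along K (fun k => Delta4 P (th k)).
Proof.
  intros _ _ _ _ _ _ HX HA HG [beta [Hb Hd]] [Hbox0 [_ [_ Hga0]]] Hiter _ Hunclipped.
  assert (Hbox : forall k, in_box P (th k)).
  { induction k as [|k IH]; [split; auto|].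
    apply (smo_iter_descent P HX HA HG _ _ _ IH (Hiter k)). }
  assert (Hdesc : forall k, descent P (th k) (th (S k)) (cl k = false) (DeltaK P (th k)))
    by (intros k; apply smo_iter_descent; auto).
  assert (Hconv : conv0_along K (fun k => DeltaK P (th k))).
  { apply (conv0_along_of_decrease K (fun k => fobj P (th k)) _
             (dual_lower_bound P beta) (/ (2 * curv_bound P))).
    - pose proof (curv_bound_pos P). apply Rinv_0_lt_compat. lra.
    - intros k. apply (Hdesc k).
    - intros k. apply fobj_ge_dual_lower_bound; auto.
    - intros k HKk. destruct (Hdesc k) as [_ [_ Hdec]].
      rewrite Rmult_comm. apply Hdec, Hunclipped, HKk. }
  repeat split; auto; apply (conv0_along_squeeze K _ _ Hconv); intros k;
    pose proof (Deltas_bounds P (th k)); tauto.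
Qed.
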